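(* Let $\mathcal D_2(\lambda)$ be the distribution defined in the context, with $\lambda\in(0,\min(\alpha,\beta/(3d)))$. Then $\mathcal D_2(\lambda)$ is a $(\gamma,V)$-stable distribution for $V:=\mathbf X_1\setminus\{X_a\}$ and for every $\gamma>0$ with $\gamma\le\beta-3d\lambda$.
   Context: Entropies use the natural logarithm; $k$ is a fixed positive integer. For a finite set of discrete random variables $\mathbf Y$, a family is $\langle Y,\Pi\rangle$ with $Y\in\mathbf Y$, $\Pi\subseteq\mathbf Y\setminus\{Y\}$, $|\Pi|\le k$, $H(\langle Y,\Pi\rangle)=H(Y\mid\Pi)$; DAGs over $\mathbf Y$ with in-degree at most $k$ are identified with their sets of families, and a set $F$ of families has score $\mathcal S(F)=-\sum_{f\in F}H(f)$. Markov-equivalent DAGs (same conditional independence constraints) form equivalence classes (ECs) with a common score; an optimal EC maximizes the score. Construction. $\mathcal D_1$ is a distribution over a finite set $\mathbf X_1$ of at least $k$ discrete variables, containing a variable $X_a$, such that for some $\alpha,\beta>0$: (I) among DAGs over $\mathbf X_1$ with in-degree $\le k$, $\mathcal D_1$ has a unique optimal EC and the score difference between it and the next-best EC is at least $\beta$; (II) $X_a$ has no children in any structure of the optimal EC; (III) $H(X_a\mid\mathbf X_1\setminus\{X_a\})=\alpha$. Let $\mathbf X=\mathbf X_1\cup\{X_b\}$, $d=|\mathbf X|$. For $\lambda\in(0,\min(\alpha,\beta/(3d)))$, $\mathcal D_2(\lambda)$ is a distribution on $\mathbf X$ whose marginal on $\mathbf X_1$ is $\mathcal D_1$ and: (IV)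 there is a hidden Bernoulli variable $C$ independent of $\mathbf X_1$ with $P[X_b=X_a\mid C=1]=1$ and $X_b$ independent of $\mathbf X_1$ given $C=0$; (V) $P(C=1)$ is such that $\max(H(X_b\mid X_a),H(X_a\mid X_b))=\lambda$. $(\gamma,V)$-stable: with $\mathcal G_{d,k}$ the DAGs over $\mathbf X$ with in-degree $\le k$ and $\mathcal S^*=\max_{G\in\mathcal G_{d,k}}\mathcal S(G)$, for $\gamma>0$ and $V\subseteq\mathbf X$ a distribution is $(\gamma,V)$-stable if (1) in every $G\in\mathcal G_{d,k}$ with $\mathcal S(G)\ge\mathcal S^*-\gamma$ all parents of every variable in $V$ are in $V$; (2) for the marginal on $V$ (over DAGs on $V$ with in-degree $\le k$) there is a unique optimal EC and the score gap between the best and second-best EC is more than $\gamma$. *)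

From HB Require Import structures.
From mathcomp Require Import all_boot all_order all_algebra.
From mathcomp Require Import reals exp.
Set Implicit Arguments. Unset Strict Implicit. Unset Printing Implicit Defensive.
Import Order.TTheory GRing.Theory Num.Theory.
Local Open Scope ring_scope.

Section Defs.
Variable R : realType.

(* A joint distribution of finitely many discrete random variables indexed by
   the finite type [Var] is given by a finite sample space [Om], a probability
   mass function [P] on it, and random variables [X v : Om -> T]. *)
Variables (Om : finType) (Var : finType) (T : eqType).

Definition is_pmf (P : Om -> R) : Prop :=
  (forall w, 0 <= P w) /\ \sum_(w : Om) P w = 1.

Definition Pr (P : Om -> R) (A : pred Om) : R := \sum_(w : Om | A w) P w.

Definition agree (X : Var -> Om -> T) (S : {set Var}) (w w' : Om) : bool :=
  [forall v in S, X v w == X v w'].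

Definition Hent (P : Om -> R) (X : Var -> Om -> T) (S : {set Var}) : R :=
  - \sum_(w : Om) P w * ln (Pr P (agree X S w)).

Definition condH (P : Om -> R) (X : Var -> Om -> T) (y : Var)
  (Pi : {set Var}) : R :=
  Hent P X (y |: Pi) - Hent P X Pi.

(* A DAG over the set of variables S is given by its parent-set function
   [pa]; it is identified with its set of families <v, pa v>, v in S. *)
Definition parent_rel (pa : {ffun Var -> {set Var}}) : rel Var :=
  [rel u v | u \in pa v].

Definition is_dag (k : nat) (S : {set Var}) (pa : {ffun Var -> {set Var}})
  : Prop :=
  [/\ forall v, v \in S -> pa v \subset S :\ v,
      forall v, v \in S -> #|pa v| <= k,
      forall v, v \notin S -> pa v = set0 &
      forall u v, u \in pa v -> ~~ connect (parent_rel pa) v u]%N.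

Definition score (P : Om -> R) (X : Var -> Om -> T) (S : {set Var})
  (pa : {ffun Var -> {set Var}}) : R :=
  - \sum_(v in S) condH P X v (pa v).

Definition adj (pa : {ffun Var -> {set Var}}) : rel Var :=
  [rel u v | (u \in pa v) || (v \in pa u)].

Definition collider (pa : {ffun Var -> {set Var}}) (u w z : Var) : bool :=
  (u \in pa w) && (z \in pa w).

Definition desc_in (pa : {ffun Var -> {set Var}}) (w : Var) (Z : {set Var})
  : bool :=
  [exists z in Z, connect (parent_rel pa) w z].

Definition active_trail (pa : {ffun Var -> {set Var}}) (Z : {set Var})
  (x y : Var) (p : seq Var) : bool :=
  [&& p != [::], uniq (x :: p), last x p == y, path (adj pa) x p &
      all (fun i =>
             let u := nth x (x :: p) i in
             let w := nth x (x :: p) i.+1 in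
             let z := nth x (x :: p) i.+2 in
             if collider pa u w z then desc_in pa w Z else w \notin Z)
          (iota 0 (size p).-1)].

Definition dsep (pa : {ffun Var -> {set Var}}) (x y : Var) (Z : {set Var})
  : Prop :=
  ~ exists p : seq Var, active_trail pa Z x y p.

(* Markov equivalence over S: the two DAGs encode the same conditional
   independence constraints (same d-separation statements). *)
Definition markov_equiv (S : {set Var}) (pa1 pa2 : {ffun Var -> {set Var}})
  : Prop :=
  forall (x y : Var) (Z : {set Var}),
    x \in S -> y \in S -> x != y -> Z \subset S :\: [set x; y] ->
    (dsep pa1 x y Z <-> dsep pa2 x y Z).

Definition stable (k : nat) (P : Om -> R) (X : Var -> Om -> T) (gamma : R)
  (V : {set Var}) : Prop :=
  (* (1) with S* the maximal score over all DAGs over the whole variable set *)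
  (forall pa, is_dag k setT pa ->
     (forall pa', is_dag k setT pa' -> score P X setT pa' - gamma <=
                                      score P X setT pa) ->
     forall v, v \in V -> pa v \subset V)
  /\
  (* (2) unique optimal EC for the marginal on V, gap more than gamma *)
  (exists pa0, is_dag k V pa0 /\
     (forall pa, is_dag k V pa -> score P X V pa <= score P X V pa0) /\
     (forall pa, is_dag k V pa -> ~ markov_equiv V pa0 pa ->
        score P X V pa < score P X V pa0 - gamma)).

End Defs.

(* X_a is a sink of every optimal structure of D1.  Adding a sink to a DAG, or
   deleting one, shifts the score by the constant H(X_a | Pa(X_a)) and keeps all
   d-separations among the other variables, so the unique optimal class of D1
   and its gap beta pass to the marginal on V, and beta > gamma.

   The optimal DAG of D1 extended by the edge X_a -> X_b scores
   S(D1) - H(X_b | X_a) >= S(D1) - lambda, so a gamma-near-optimal DAG G over X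
   scores at least S(D1) - lambda - gamma.  Merge X_b into X_a in G: X_a takes
   over the children of X_b and the parents of whichever of the two comes first
   in G.  As H(X_b | X_a) and H(X_a | X_b) are at most lambda, submodularity of
   entropy makes each family cost at most lambda more, so the merged DAG over X1
   is within gamma + d lambda < beta of the optimum of D1.  It is therefore in
   the optimal class, where X_a has no children; hence no variable of V has X_a
   or X_b as a parent in G. *)

From HB Require Import structures.
From mathcomp Require Import all_boot all_order all_algebra.
From mathcomp Require Import reals exp.
From mathcomp Require Import ring lra zify.
Set Implicit Arguments. Unset Strict Implicit. Unset Printing Implicit Defensive.
Import Order.TTheory GRing.Theory Num.Theory.
Local Open Scope ring_scope.

Lemma ln_le_subr1 (R : realType) (x : R) : 0 < x -> ln x <= x - 1.
Proof. by move=> x0; have := @le_ln1Dx R (x - 1); rewrite subrKC; apply; lra. Qed.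

Section Entropy.
Variables (R : realType) (Om Var : finType) (T : eqType).
Variables (P : Om -> R) (X : Var -> Om -> T).
Hypothesis P_pmf : is_pmf P.
Implicit Types (S U : {set Var}) (A B : pred Om).

Lemma P_ge0 w : 0 <= P w. Proof. by case: P_pmf. Qed.

Lemma agree_refl S w : agree X S w w.
Proof. exact/forall_inP. Qed.

Lemma agree_sym S w w' : agree X S w w' = agree X S w' w.
Proof. by apply/forall_inP/forall_inP => H v /H /eqP ->. Qed.

Lemma agree_trans S w1 w2 w3 :
  agree X S w1 w2 -> agree X S w2 w3 -> agree X S w1 w3.
Proof.
move=> /forall_inP H1 /forall_inP H2; apply/forall_inP => v vS.
by rewrite (eqP (H1 v vS)) H2.
Qed.

Lemma agreeS S S' w w' : S \subset S' -> agree X S' w w' -> agree X S w w'.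
Proof. by move=> /subsetP sS /forall_inP H; apply/forall_inP => v /sS /H. Qed.

Lemma agreeU S S' w w' :
  agree X (S :|: S') w w' = agree X S w w' && agree X S' w w'.
Proof.
apply/idP/andP => [H | [/forall_inP H1 /forall_inP H2]].
  by split; apply: agreeS H; rewrite ?subsetUl ?subsetUr.
by apply/forall_inP => v /setUP [/H1 | /H2].
Qed.

Lemma Pr_ge0 A : 0 <= Pr P A.
Proof. exact/sumr_ge0/(fun w _ => P_ge0 w). Qed.

Lemma PrE A : Pr P A = \sum_w (A w)%:R * P w.
Proof.
rewrite /Pr big_mkcond; apply: eq_bigr => w _.
by case: (A w); rewrite ?mul1r ?mul0r.
Qed.

Lemma le_Pr A B : subpred A B -> Pr P A <= Pr P B.
Proof.
move=> AB; rewrite !PrE; apply: ler_sum => w _; apply: ler_wpM2r; first exact: P_ge0.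
by case: (boolP (A w)) => [/AB -> | _] //; case: (B w).
Qed.

Lemma Pr_agree_ge S w : P w <= Pr P (agree X S w).
Proof.
rewrite /Pr (bigD1 w) ?agree_refl //= lerDl.
exact/sumr_ge0/(fun w _ => P_ge0 w).
Qed.

Lemma Pr_agree_gt0 S w : P w != 0 -> 0 < Pr P (agree X S w).
Proof. by move=> Pw; apply: lt_le_trans (Pr_agree_ge S w); rewrite lt0r Pw P_ge0. Qed.

Lemma eq_Pr_agree S w w' : agree X S w w' ->
  Pr P (agree X S w) = Pr P (agree X S w').
Proof.
move=> ww'; apply: eq_bigl => u; apply/idP/idP; last exact: agree_trans.
by apply: agree_trans; rewrite agree_sym.
Qed.

Lemma le_Hent S S' : S \subset S' -> Hent P X S <= Hent P X S'.
Proof.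
move=> sS; rewrite lerN2; apply: ler_sum => w _.
have [-> | Pw] := eqVneq (P w) 0; first by rewrite !mul0r.
apply: ler_wpM2l; first exact: P_ge0.
rewrite ler_ln ?posrE ?Pr_agree_gt0 //.
by apply: le_Pr => u; apply: agreeS.
Qed.

Lemma condH_ge0 v S : 0 <= condH P X v S.
Proof. by rewrite subr_ge0 le_Hent // subsetUr. Qed.

Section Submodularity.
Variables (S S' U : {set Var}).
Hypothesis sSS' : S \subset S'.

Let pS w := Pr P (agree X S w).
Let pSU w := Pr P (agree X (S :|: U) w).
Let pS' w := Pr P (agree X S' w).
Let pS'U w := Pr P (agree X (S' :|: U) w).

Lemma agree_cell w w' w1 w2 :
  agree X S' w w1 -> agree X (S :|: U) w w2 ->
  agree X S' w' w1 -> agree X (S :|: U) w' w2 -> agree X (S' :|: U) w w'.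
Proof.
move=> h1 h2 h1' h2'; rewrite agreeU (agree_trans h1) /=; last by rewrite agree_sym.
apply: (agree_trans (w2 := w2)); first exact: agreeS (subsetUr _ _) h2.
by rewrite agree_sym; apply: agreeS (subsetUr _ _) h2'.
Qed.

(* All w in the cell {w ~S' w1, w ~(S u U) w2} share their S-class and their
   (S' u U)-class, and the cell lies in the latter. *)
Lemma sum_cell_le w1 w2 :
  \sum_w (agree X S' w w1 && agree X (S :|: U) w w2)%:R * (P w / (pS w * pS'U w))
  <= (agree X S w1 w2)%:R / pS w1.
Proof.
set A := fun w => agree X S' w w1 && agree X (S :|: U) w w2.
have [w0 /andP [h01 h02] | A0] := pickP A; last first.
  rewrite big1 ?divr_ge0 ?Pr_ge0 // => w _.
  by move: (A0 w); rewrite /A => ->; rewrite mul0r.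
have inS w : A w -> agree X S w w1 by case/andP => /(agreeS sSS').
have inS'U w : A w -> agree X (S' :|: U) w0 w.
  by case/andP; apply: agree_cell.
have -> : agree X S w1 w2.
  rewrite agree_sym in h01; apply: agree_trans (agreeS sSS' h01) _.
  exact: agreeS (subsetUl _ _) h02.
have hA : \sum_w (A w)%:R * (P w / (pS w * pS'U w)) = Pr P A / (pS w1 * pS'U w0).
  rewrite PrE mulr_suml; apply: eq_bigr => w _; rewrite -mulrA.
  case: (boolP (A w)) => Aw; rewrite ?mul0r //.
  by rewrite /pS /pS'U (eq_Pr_agree (inS w Aw)) -(eq_Pr_agree (inS'U w Aw)).
rewrite hA mul1r.
have [-> | d0] := eqVneq (pS'U w0) 0; first by rewrite mulr0 invr0 mulr0 invr_ge0 Pr_ge0.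
rewrite invfM mulrCA -[X in _ <= X]mulr1 ler_wpM2l ?invr_ge0 ?Pr_ge0 //.
rewrite ler_pdivrMr ?lt0r ?d0 ?Pr_ge0 // mul1r.
by apply: le_Pr => w /inS'U; rewrite agree_sym.
Qed.

Lemma sum_mass_ratio_le1 :
  \sum_w P w * (pSU w * pS' w / (pS w * pS'U w)) <= 1.
Proof.
set F := fun w => P w / (pS w * pS'U w).
set ind := fun w w1 w2 => (agree X S' w w1 && agree X (S :|: U) w w2)%:R : R.
have expand w : P w * (pSU w * pS' w / (pS w * pS'U w)) =
    \sum_w1 \sum_w2 P w1 * P w2 * (ind w w1 w2 * F w).
  have -> : P w * (pSU w * pS' w / (pS w * pS'U w)) = pS' w * pSU w * F w.
    by rewrite /F; ring.
  rewrite /pSU /pS' !PrE big_distrlr mulr_suml; apply: eq_bigr => w1 _.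
  rewrite mulr_suml; apply: eq_bigr => w2 _; rewrite /ind.
  by case: (agree X S' w w1); case: (agree X (S :|: U) w w2) => /=; ring.
rewrite (eq_bigr _ (fun w _ => expand w)) exchange_big /=.
apply: (@le_trans _ _ (\sum_w1 P w1 * (pS w1 / pS w1))); last first.
  case: P_pmf => _ <-; apply: ler_sum => w1 _.
  apply: ler_piMr; first exact: P_ge0.
  by have [-> | ?] := eqVneq (pS w1) 0; rewrite ?mul0r ?divff.
apply: ler_sum => w1 _; rewrite exchange_big /=.
have -> : P w1 * (pS w1 / pS w1) =
    \sum_w2 P w1 * P w2 * ((agree X S w1 w2)%:R / pS w1).
  rewrite {1}/pS PrE mulr_suml mulr_sumr; apply: eq_bigr => w2 _; ring.
apply: ler_sum => w2 _; rewrite -mulr_sumr ler_wpM2l ?mulr_ge0 ?P_ge0 //.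
exact: sum_cell_le.
Qed.

Lemma Hent_submod :
  Hent P X (S' :|: U) - Hent P X S' <= Hent P X (S :|: U) - Hent P X S.
Proof.
rewrite -subr_le0.
have -> : Hent P X (S' :|: U) - Hent P X S' - (Hent P X (S :|: U) - Hent P X S) =
    \sum_w P w * (ln (pSU w) + ln (pS' w) - ln (pS w) - ln (pS'U w)).
  rewrite (eq_bigr (fun w => P w * ln (pSU w) + P w * ln (pS' w) - P w * ln (pS w)
    - P w * ln (pS'U w))) => [|w _]; last by ring.
  by rewrite !sumrB big_split /= /Hent; ring.
apply: (@le_trans _ _ (\sum_w P w * (pSU w * pS' w / (pS w * pS'U w) - 1))).
  apply: ler_sum => w _.
  have [-> | Pw] := eqVneq (P w) 0; first by rewrite !mul0r.
  rewrite ler_wpM2l ?P_ge0 //.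
  have pos (S0 : {set Var}) : Pr P (agree X S0 w) \in Num.pos.
    by rewrite posrE Pr_agree_gt0.
  have -> : ln (pSU w) + ln (pS' w) - ln (pS w) - ln (pS'U w) =
      ln (pSU w * pS' w / (pS w * pS'U w)).
    by rewrite ln_div ?rpredM ?pos // !lnM ?pos //; ring.
  by rewrite ln_le_subr1 // divr_gt0 ?mulr_gt0 ?Pr_agree_gt0.
rewrite (eq_bigr (fun w => P w * (pSU w * pS' w / (pS w * pS'U w)) - P w)) => [|w _];
  last by ring.
by rewrite sumrB subr_le0; case: P_pmf => _ ->; apply: sum_mass_ratio_le1.
Qed.

End Submodularity.

Lemma le_condH v (Pi A : {set Var}) :
  Pi \subset A -> condH P X v A <= condH P X v Pi.
Proof.
by move=> sPA; have := Hent_submod [set v] sPA; rewrite /condH !(setUC _ [set v]).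
Qed.

Lemma condH_replace_parent v a b (A Pi : {set Var}) : a \in A -> Pi \subset b |: A ->
  condH P X v A <= condH P X v Pi + condH P X b [set a].
Proof.
move=> aA sPi; have hvb := le_condH v sPi.
have hb : Hent P X (b |: A) - Hent P X A <= condH P X b [set a].
  have := Hent_submod [set b] (_ : [set a] \subset A).
  by rewrite sub1set !(setUC _ [set b]); apply.
have hv : Hent P X (v |: A) <= Hent P X (v |: (b |: A)).
  by rewrite le_Hent // setUCA subsetUr.
move: hvb hb; rewrite /condH; lra.
Qed.

Lemma condH_le_proxy a b (Pi : {set Var}) :
  condH P X a Pi <= condH P X b Pi + condH P X a [set b].
Proof.
have hab : condH P X a (b |: Pi) <= condH P X a [set b].
  by rewrite le_condH // sub1set setU11.
have ha : Hent P X (a |: Pi) <= Hent P X (a |: (b |: Pi)).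
  by rewrite le_Hent // setUCA subsetUr.
move: hab; rewrite /condH; lra.
Qed.

End Entropy.

Section Acyclic.
Variable V : finType.
Implicit Types r : rel V.

Definition acyclic r := forall u v, r u v -> ~~ connect r v u.

Lemma connect_from_sink r s z : (forall v, ~~ r s v) -> connect r s z -> z = s.
Proof.
move=> sink /connectP [[|y p] /=]; first by move=> _ ->.
by rewrite (negPf (sink y)).
Qed.

Lemma connect_neq_step r x y : connect r x y -> x != y -> exists2 z, r x z & connect r z y.
Proof.
case/connectP => [[|z p]] /=; first by move=> _ ->; rewrite eqxx.
by case/andP => rxz pz ->; exists z => //; apply/connectP; exists p.
Qed.

Lemma connect_avoid_sink r s x z : (forall v, ~~ r s v) -> z != s ->
  connect r x z -> connect [rel u v | r u v && (v != s)] x z.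
Proof.
move=> sink zs /connectP [p]; elim: p x => [|y p IH] x /=; first by move=> _ ->.
case/andP => rxy py lz; have ys : y != s.
  apply: contraNneq zs => ys; rewrite lz; move: py {IH lz}; rewrite ys.
  by case: p => [|y' p] //=; rewrite (negPf (sink y')).
by apply: connect_trans (connect1 _) (IH _ py lz); rewrite /= rxy.
Qed.

Lemma eq_connect_sink r r' s x z : (forall u v, v != s -> r u v = r' u v) ->
  (forall v, ~~ r s v) -> (forall v, ~~ r' s v) -> z != s ->
  connect r x z = connect r' x z.
Proof.
move=> req sr sr' zs.
have sub r1 r2 : (forall u v, v != s -> r1 u v -> r2 u v) -> (forall v, ~~ r1 s v) ->
    connect r1 x z -> connect r2 x z.
  move=> r12 s1 /(connect_avoid_sink s1 zs); apply: connect_sub => u v /andP [r1uv vs].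
  exact/connect1/r12.
by apply/idP/idP; apply: sub => // u v vs; rewrite req.
Qed.

Lemma acyclic_contract r r' (f : V -> V) : acyclic r ->
  (forall x y, r' x y -> exists2 z, r (f x) z & connect r z (f y)) -> acyclic r'.
Proof.
move=> acr hf u v /hf [z rz czv]; apply/negP => cvu.
have cf x y : connect r' x y -> connect r (f x) (f y).
  move=> /connectP [p pth ->]; elim: p x pth => //= y' p IH x /andP [/hf [z' rz' cz'] /IH].
  exact/connect_trans/(connect_trans (connect1 rz') cz').
by move: (acr _ _ rz); rewrite (connect_trans czv (cf _ _ cvu)).
Qed.

Lemma acyclic_add_edge r u v : acyclic r -> ~~ connect r v u ->
  acyclic [rel x y | r x y || (x == u) && (y == v)].
Proof.
move=> acr nvu; set r' := [rel x y | _].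
have split_path x y : connect r' x y ->
    connect r x y \/ connect r x u /\ connect r v y.
  move=> /connectP [p pth ->] {y}; elim: p x pth => [|y p IH] x /=; first by left.
  case/andP => /orP [rxy | /andP [/eqP -> /eqP ->]] /IH [cy | [cu cv]].
  - by left; apply: connect_trans (connect1 rxy) cy.
  - by right; split; first apply: connect_trans (connect1 rxy) cu.
  - by right.
  - by right.
move=> x y /orP [rxy | /andP [/eqP -> /eqP ->]]; apply/negP => /split_path.
  case=> [cyx | [cyu cvx]]; first by move: (acr _ _ rxy); rewrite cyx.
  by move: nvu; rewrite (connect_trans cvx (connect_trans (connect1 rxy) cyu)).
by case=> [cvu | [cvu _]]; rewrite cvu in nvu.
Qed.

End Acyclic.

Section AddSink.
Variable Var : finType.
Implicit Types (pa : {ffun Var -> {set Var}}) (S Q : {set Var}).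

Definition add_sink pa s Q : {ffun Var -> {set Var}} :=
  [ffun v => if v == s then Q else pa v].

Lemma add_sinkE pa s Q v : add_sink pa s Q v = if v == s then Q else pa v.
Proof. exact: ffunE. Qed.

Lemma add_sink_id pa s : add_sink pa s (pa s) = pa.
Proof. by apply/ffunP => v; rewrite add_sinkE; case: eqP => // ->. Qed.

Lemma add_sinkK pa s Q Q' : add_sink (add_sink pa s Q) s Q' = add_sink pa s Q'.
Proof. by apply/ffunP => v; rewrite !add_sinkE; case: eqP. Qed.

Lemma dag_parentsS k S pa v : is_dag k S pa -> pa v \subset S.
Proof.
case=> sub _ out _; case: (boolP (v \in S)) => [/sub/subset_trans -> // | /out ->].
  exact: subD1set.
exact: sub0set.
Qed.

Lemma dag_notin_parents k S pa s v : is_dag k S pa -> s \notin S -> s \notin pa v.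
Proof. by move=> /(dag_parentsS v) /subsetP sS; apply: contra => /sS. Qed.

Lemma acyclic_add_sink pa s Q : acyclic (parent_rel pa) ->
  (forall v, s \notin pa v) -> s \notin Q -> acyclic (parent_rel (add_sink pa s Q)).
Proof.
move=> acyc spa sQ.
have sink pa' : (forall v, s \notin pa' v) -> forall v, ~~ parent_rel pa' s v by [].
have snew v : s \notin add_sink pa s Q v by rewrite add_sinkE; case: eqP.
move=> u v; rewrite /parent_rel /= add_sinkE; case: eqP => [-> uQ | /eqP vs upa].
  by apply/negP => /(connect_from_sink (sink _ snew)) us; rewrite -us uQ in sQ.
rewrite -(@eq_connect_sink _ (parent_rel pa) _ s) ?(sink _ spa) ?(sink _ snew) //.
- exact: acyc.
- by move=> x y ys; rewrite /= add_sinkE (negPf ys).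
- by apply: contraNneq (spa v) => <-.
Qed.

Lemma is_dag_add_sink k S pa s Q : is_dag k S pa -> s \notin S ->
  Q \subset S -> (#|Q| <= k)%N -> is_dag k (s |: S) (add_sink pa s Q).
Proof.
move=> dag sS QS Qk; have [sub card out acyc] := dag.
split=> [v | v | v | ]; rewrite ?add_sinkE.
- case: eqP => [-> _ | /eqP vs].
    by apply: subset_trans QS _; rewrite setU1K // subsetDl.
  rewrite in_setU1 (negPf vs) => /sub /subset_trans; apply; apply: setSD; exact: subsetUr.
- by case: eqP => // /eqP vs; rewrite in_setU1 (negPf vs); apply: card.
- by rewrite in_setU1 negb_or => /andP [/negPf -> /out].
- apply: acyclic_add_sink acyc _ _ => [v | ]; first exact: dag_notin_parents dag sS.
  by apply: contra sS => /(subsetP QS).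
Qed.

Lemma is_dag_del_sink k S pa s : is_dag k S pa -> s \in S ->
  (forall v, s \notin pa v) -> is_dag k (S :\ s) (add_sink pa s set0).
Proof.
move=> dag sS spa; have [sub card out acyc] := dag.
split=> [v | v | v | ]; rewrite ?add_sinkE.
- rewrite in_setD1 => /andP [/negPf -> /sub pvS]; apply/subsetP => u upv.
  move: (subsetP pvS u upv); rewrite !in_setD1 => /andP [-> ->]; rewrite andbT /=.
  by apply: contraNneq (spa v) => <-.
- by rewrite in_setD1 => /andP [/negPf -> /card].
- by rewrite in_setD1 negb_and negbK; case: eqP => //= _ /out.
- by apply: acyclic_add_sink; rewrite ?in_set0.
Qed.

Lemma score_add_sink (R : realType) (Om : finType) (T : eqType) (P : Om -> R)
  (X : Var -> Om -> T) S pa s Q : s \notin S ->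
  score P X (s |: S) (add_sink pa s Q) = score P X S pa - condH P X s Q.
Proof.
move=> sS; rewrite /score big_setU1 //= add_sinkE eqxx opprD addrC; congr (_ - _).
congr (- _); apply: eq_bigr => v vS; rewrite add_sinkE.
by case: eqP => // vs; move: sS; rewrite -vs vS.
Qed.

End AddSink.

Lemma path_avoid_isolated (V : finType) (r : rel V) s x p : path r x p -> p != [::] ->
  (forall u, ~~ r u s && ~~ r s u) -> s \notin x :: p.
Proof.
move=> pth pn iso; elim: p x pth pn => [//|y p IH] x /= /andP [rxy py] _.
rewrite in_cons negb_or; apply/andP; split.
  by apply: contraTneq rxy => <-; case/andP: (iso y).
case: p IH py => [_ _ | z p IH py]; last exact: IH.
by rewrite mem_seq1; apply: contraTneq rxy => <-; case/andP: (iso x).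
Qed.

Section DsepAddSink.
Variables (Var : finType) (pa : {ffun Var -> {set Var}}) (s : Var) (Q : {set Var}).
Hypotheses (pa_s : pa s = set0) (s_nchild : forall v, s \notin pa v) (s_nQ : s \notin Q).
Let pa' := add_sink pa s Q.

Lemma s_nchild' v : s \notin pa' v.
Proof. by rewrite add_sinkE; case: eqP. Qed.

Lemma active_trail_avoid_isolated (Z : {set Var}) x y p :
  active_trail pa Z x y p -> s \notin x :: p.
Proof.
case/and5P => pn _ _ pth _; apply: (path_avoid_isolated pth pn) => u.
by rewrite /adj /= pa_s in_set0 orbF s_nchild.
Qed.

(* An interior occurrence of the sink s is a collider whose only descendant, s,
   is not in Z. *)
Lemma active_trail_avoid_sink (Z : {set Var}) x y p : x != s -> y != s -> s \notin Z ->
  active_trail pa' Z x y p -> s \notin x :: p.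
Proof.
move=> xs ys sZ /and5P [pn _ /eqP ly pth /allP hall]; apply/negP => sin.
set j := index s (x :: p).
have hj : nth x (x :: p) j = s by apply: nth_index.
have jlt : (j < (size p).+1)%N by rewrite -[(size p).+1]/(size (x :: p)) index_mem.
have j0 : j != 0%N by apply: contraNneq xs => j0; rewrite -hj j0.
have jn : j != size p.
  by apply: contraNneq ys => jn; rewrite -ly -hj jn -[last x p](nth_last x (x :: p)).
have [i ji] : exists i, j = i.+1 by exists j.-1; rewrite prednK // lt0n.
have iin : i \in iota 0 (size p).-1 by rewrite mem_iota add0n; lia.
have /pathP hp := pth; have a1 := hp x i (ltac:(lia)); have a2 := hp x j (ltac:(lia)).
have hs : nth x p i = s by rewrite -hj ji.
move: (hall _ iin) a1 a2; rewrite /= hs -ji hj.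
rewrite /adj /= !(negPf (s_nchild' _)) /= !orbF.
move=> + us zs; rewrite /collider us zs /= => /existsP [z' /andP [z'Z cz']].
by move: z'Z; rewrite (connect_from_sink _ cz') ?(negPf sZ) // => v; apply: s_nchild'.
Qed.

Lemma active_trail_add_sink (Z : {set Var}) x y p : s \notin x :: p -> s \notin Z ->
  active_trail pa Z x y p = active_trail pa' Z x y p.
Proof.
move=> sp sZ; have ns i : nth x (x :: p) i != s.
  apply: contraNneq sp => <-.
  case: (ltnP i (size (x :: p))) => [/(mem_nth x) // | /(nth_default x) ->].
  exact: mem_head.
rewrite /active_trail; congr [&& _, _, _, _ & _].
  apply: (@eq_in_path _ (predC1 s)) => [u v /= us vs | ].
    by rewrite /adj /= !add_sinkE (negPf us) (negPf vs).
  by apply/allP => z zp; apply: contraNneq sp => <-.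
apply: eq_all => i /=; rewrite /collider !add_sinkE (negPf (ns i.+1)).
case: ifP => // _; apply: eq_existsb => z; case: (boolP (z \in Z)) => //= zZ.
apply: eq_connect_sink => [u v vs | v | v | ]; rewrite /parent_rel /=.
- by rewrite add_sinkE (negPf vs).
- exact: s_nchild.
- exact: s_nchild'.
- by apply: contraNneq sZ => <-.
Qed.

Lemma dsep_add_sink (Z : {set Var}) x y : x != s -> y != s -> s \notin Z ->
  dsep pa x y Z <-> dsep pa' x y Z.
Proof.
move=> xs ys sZ; split=> nsep [p tr]; apply: nsep; exists p.
  by rewrite active_trail_add_sink // (active_trail_avoid_sink xs ys sZ tr).
by rewrite -active_trail_add_sink // (active_trail_avoid_isolated tr).
Qed.

End DsepAddSink.

Lemma markov_equiv_refl (Var : finType) (S : {set Var}) (pa : {ffun Var -> {set Var}}) :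
  markov_equiv S pa pa.
Proof. by []. Qed.

Lemma markov_equiv_add_sink (Var : finType) k (S Q1 Q2 : {set Var}) pa1 pa2 s :
  is_dag k S pa1 -> is_dag k S pa2 -> s \notin S -> Q1 \subset S -> Q2 \subset S ->
  markov_equiv (s |: S) (add_sink pa1 s Q1) (add_sink pa2 s Q2) ->
  markov_equiv S pa1 pa2.
Proof.
move=> dag1 dag2 sS Q1S Q2S me x y Z xS yS xy ZS.
have ns (A : {set Var}) : A \subset S -> s \notin A.
  by move=> /subsetP AS; apply: contra sS => /AS.
have [xs ys] : x != s /\ y != s by split; apply: contraNneq sS => <-.
have sZ : s \notin Z by apply/ns/(subset_trans ZS)/subsetDl.
have sink (pa : {ffun Var -> {set Var}}) (Q : {set Var}) : is_dag k S pa -> Q \subset S ->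
    dsep pa x y Z <-> dsep (add_sink pa s Q) x y Z.
  move=> dag QS; apply: dsep_add_sink => //; last exact: ns.
    by case: dag => _ _ -> //.
  by move=> v; apply: dag_notin_parents dag sS.
rewrite (sink _ _ dag1 Q1S) (sink _ _ dag2 Q2S).
apply: me; rewrite ?in_setU1 ?xS ?yS ?orbT //.
by apply: subset_trans ZS _; apply/setSD/subsetUr.
Qed.

Section Marginal.
Variables (R : realType) (Om Var : finType) (T : eqType).
Variables (P : Om -> R) (X : Var -> Om -> T).
Variables (k : nat) (S : {set Var}) (a : Var) (pa1 : {ffun Var -> {set Var}}).
Variables (beta gamma : R).
Hypotheses (aS : a \in S) (dag1 : is_dag k S pa1) (a_nchild : forall v, a \notin pa1 v).
Hypotheses (opt1 : forall pa, is_dag k S pa -> score P X S pa <= score P X S pa1)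
  (gap1 : forall pa, is_dag k S pa -> ~ markov_equiv S pa1 pa ->
            score P X S pa <= score P X S pa1 - beta)
  (gamma_lt_beta : gamma < beta).

Let V := S :\ a.
Let extend (pa : {ffun Var -> {set Var}}) := add_sink pa a (pa1 a).

Lemma marginal_unique_optimum : exists pa0, is_dag k V pa0 /\
  (forall pa, is_dag k V pa -> score P X V pa <= score P X V pa0) /\
  (forall pa, is_dag k V pa -> ~ markov_equiv V pa0 pa ->
     score P X V pa < score P X V pa0 - gamma).
Proof.
have SE : a |: V = S by rewrite setD1K.
have aV : a \notin V by rewrite setD11.
have pa1V : pa1 a \subset V by case: dag1 => /(_ a aS).
have dag_ext pa : is_dag k V pa -> is_dag k S (extend pa).
  move=> dag; rewrite -SE; apply: is_dag_add_sink => //.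
  by case: dag1 => _ /(_ a aS).
have score_ext pa : score P X S (extend pa) = score P X V pa - condH P X a (pa1 a).
  by rewrite -{1}SE score_add_sink.
set pa0 := add_sink pa1 a set0.
have pa1E : add_sink pa0 a (pa1 a) = pa1 by rewrite add_sinkK add_sink_id.
have score1 : score P X S pa1 = score P X V pa0 - condH P X a (pa1 a).
  by rewrite -score_ext /extend pa1E.
have dag0 : is_dag k V pa0 by apply: is_dag_del_sink.
exists pa0; split; [done | split=> pa dag].
  by have := opt1 (dag_ext _ dag); rewrite score1 score_ext lerD2r.
move=> nme; have : score P X S (extend pa) <= score P X S pa1 - beta.
  apply: gap1 (dag_ext _ dag) _ => me; apply: nme.
  by apply: (markov_equiv_add_sink dag0 dag aV pa1V pa1V); rewrite SE pa1E.
move: gamma_lt_beta; rewrite score1 score_ext; lra.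
Qed.

End Marginal.

Section Merge.
Variables (Var : finType) (k : nat) (pa : {ffun Var -> {set Var}}) (a b : Var).
Hypotheses (dag : is_dag k setT pa) (ab : a != b).
Let X1 := [set: Var] :\ b.
Let e := parent_rel pa.

Definition merge_node (Q : {set Var}) : {ffun Var -> {set Var}} :=
  [ffun v => if v == b then set0 else if v == a then Q
             else if (a \in pa v) || (b \in pa v) then a |: (pa v :\ a :\ b) else pa v].

Lemma in_X1 v : (v \in X1) = (v != b).
Proof. by rewrite in_setD1 in_setT andbT. Qed.

Lemma parent_neq u v : u \in pa v -> u != v.
Proof.
case: dag => /(_ v (in_setT v)) /subsetP sub _ _ _ /sub.
by rewrite in_setD1 => /andP [].
Qed.

Lemma is_dag_merge_node (Q : {set Var}) : Q \subset X1 :\ a -> (#|Q| <= k)%N ->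
  acyclic (parent_rel (merge_node Q)) -> is_dag k X1 (merge_node Q).
Proof.
have [_ card _ _] := dag; move=> QX1 Qk acyc.
split=> [v | v | v | //]; rewrite in_X1 ?negbK ffunE; last by move=> ->.
- move=> /negPf -> ; case: eqP => [-> // | /eqP va].
  apply/subsetP => u; rewrite in_setD1 in_X1; case: ifP => [_ | /norP [nav nbv] upa].
    rewrite in_setU1 => /orP [/eqP -> | ]; first by rewrite eq_sym va.
    by rewrite !in_setD1 => /and3P [-> _ /parent_neq ->].
  by rewrite (parent_neq upa); apply: contraNneq nbv => <-.
- move=> /negPf ->; case: eqP => // /eqP va; case: ifP => [cond | _]; last exact: card.
  have := card v (in_setT v); rewrite cardsU1 !in_setD1 eqxx /= andbF /=.
  rewrite (cardsD1 a (pa v)) (cardsD1 b (pa v :\ a)) in_setD1 eq_sym ab /=.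
  by case/orP: cond => ->; case: (b \in pa v); lia.
Qed.

Lemma merge_node_parent (Q : {set Var}) v : v \in X1 :\ a ->
  (a \in pa v) || (b \in pa v) -> a \in merge_node Q v.
Proof.
by rewrite in_setD1 in_X1 ffunE => /andP [/negPf -> /negPf ->] ->; rewrite setU11.
Qed.

Lemma acyclic_merge_node_nconnect :
  ~~ connect e b a -> acyclic (parent_rel (merge_node (pa a))).
Proof.
move=> nba; have acyc : acyclic e by case: dag.
apply: (acyclic_contract (f := id) (acyclic_add_edge acyc nba)) => u v.
rewrite /parent_rel /= ffunE; case: (eqVneq v b) => [_ | _]; first by rewrite inE.
case: (eqVneq v a) => [-> upa | _]; first by exists a => //; apply/orP; left.
case: ifP => [cond | _ upa]; last by exists v => //; apply/orP; left.
rewrite in_setU1 => /orP [/eqP -> | /setD1P [_ /setD1P [_ upa]]]; last first.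
  by exists v => //; apply/orP; left.
case/orP: cond => [av | bv]; first by exists v => //; apply/orP; left.
by exists b; rewrite ?eqxx ?orbT // connect1 //; apply/orP; left.
Qed.

Lemma acyclic_merge_node_connect :
  connect e b a -> acyclic (parent_rel (merge_node (pa b))).
Proof.
move=> ba; have acyc : acyclic e by case: dag.
have anb : a \notin pa b by apply/negP => /acyc; rewrite ba.
pose psi v := if v == a then b else v.
apply: (acyclic_contract (f := psi) acyc) => u v.
rewrite /parent_rel /= ffunE /psi; case: (eqVneq v b) => [_ | _]; first by rewrite inE.
case: (eqVneq v a) => [_ upa | va].
  by rewrite ifN; [exists b | apply: contraNneq anb => <-].
case: ifP => [cond | /norP [nav _] upa]; last first.
  by rewrite ifN; [exists v | apply: contraNneq nav => <-].
rewrite in_setU1 => /orP [/eqP -> | /setD1P [_ /setD1P [ua upa]]]; last first.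
  by rewrite (negPf ua); exists v.
rewrite eqxx; case/orP: cond => [av | bv]; last by exists v.
have [z bz za] : exists2 z, e b z & connect e z a.
  by apply: connect_neq_step ba _; rewrite eq_sym.
by exists z => //; apply: connect_trans za (connect1 _).
Qed.

Variables (R : realType) (Om : finType) (T : eqType) (P : Om -> R) (X : Var -> Om -> T).
Hypothesis P_pmf : is_pmf P.

Lemma condH_merge_node (Q : {set Var}) v : v \in X1 :\ a ->
  condH P X v (merge_node Q v) <= condH P X v (pa v) + condH P X b [set a].
Proof.
rewrite in_setD1 in_X1 ffunE => /andP [/negPf -> /negPf ->].
case: ifP => _; last by rewrite lerDl condH_ge0.
apply: condH_replace_parent => //; first exact: setU11.
by apply/subsetP => u upa; rewrite !inE upa; case: (u == b); case: (u == a).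
Qed.

Lemma score_merge_node (Q : {set Var}) (lam : R) : condH P X b [set a] <= lam ->
  condH P X a Q <= condH P X a (pa a) + condH P X b (pa b) + lam ->
  score P X setT pa - #|X1|%:R * lam <= score P X X1 (merge_node Q).
Proof.
move=> hba hQ; have aX1 : a \in X1 by rewrite in_X1.
have hsum : \sum_(v in X1 :\ a) condH P X v (merge_node Q v) <=
    \sum_(v in X1 :\ a) condH P X v (pa v) + #|X1 :\ a|%:R * lam.
  rewrite mulr_natl -sumr_const -big_split /=; apply: ler_sum => v vX.
  by apply: le_trans (condH_merge_node Q vX) _; rewrite lerD2l.
have hcard : #|X1|%:R = #|X1 :\ a|%:R + 1 :> R by rewrite (cardsD1 a X1) aX1 natrD addrC.
move: hsum hQ; rewrite /score (big_setD1 b (in_setT b)) !(big_setD1 a aX1) /= ffunE.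
rewrite (negPf ab) eqxx hcard mulrDl mul1r.
have := condH_ge0 X P_pmf a (pa a); have := condH_ge0 X P_pmf b (pa b); lra.
Qed.

Lemma merge_exists (lam : R) : condH P X b [set a] <= lam -> condH P X a [set b] <= lam ->
  exists G, [/\ is_dag k X1 G, score P X setT pa - #|X1|%:R * lam <= score P X X1 G &
    forall v, v \in X1 :\ a -> (a \in pa v) || (b \in pa v) -> a \in G v].
Proof.
move=> hba hab; have [_ card _ acyc] := dag.
have sub v : a \notin pa v -> b \notin pa v -> pa v \subset X1 :\ a.
  move=> nav nbv; apply/subsetP => u upa; rewrite in_setD1 in_X1.
  by apply/andP; split; [apply: contraNneq nav | apply: contraNneq nbv] => <-.
have nself v : v \notin pa v by apply/negP => /parent_neq; rewrite eqxx.
have ha0 := condH_ge0 X P_pmf a (pa a); have hb0 := condH_ge0 X P_pmf b (pa b).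
have hba0 := condH_ge0 X P_pmf b [set a].
case: (boolP (connect e b a)) => ba.
  have anb : a \notin pa b by apply/negP => /acyc; rewrite ba.
  exists (merge_node (pa b)); split; last exact: merge_node_parent.
    apply: is_dag_merge_node; [exact: sub | exact: card |].
    exact: acyclic_merge_node_connect.
  apply: (score_merge_node hba).
  have := condH_le_proxy X P_pmf a b (pa b); lra.
have bna : b \notin pa a by apply: contra ba => bpa; apply: connect1.
exists (merge_node (pa a)); split; last exact: merge_node_parent.
  apply: is_dag_merge_node; [exact: sub | exact: card |].
  exact: acyclic_merge_node_nconnect.
by apply: (score_merge_node hba); lra.
Qed.

End Merge.

Section NearOptimal.
Variables (R : realType) (Om Var : finType) (T : eqType).
Variables (P : Om -> R) (X : Var -> Om -> T).
Variables (k : nat) (a b : Var) (pa1 : {ffun Var -> {set Var}}) (lam beta gamma : R).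
Let X1 := [set: Var] :\ b.
Hypotheses (P_pmf : is_pmf P) (k_gt0 : (0 < k)%N) (ab : a != b).
Hypotheses (hba : condH P X b [set a] <= lam) (hab : condH P X a [set b] <= lam)
  (lam_gt0 : 0 < lam) (gamma_le : gamma <= beta - 3 * #|Var|%:R * lam).
Hypotheses (dag1 : is_dag k X1 pa1)
  (gap1 : forall pa, is_dag k X1 pa -> ~ markov_equiv X1 pa1 pa ->
            score P X X1 pa <= score P X X1 pa1 - beta)
  (nochild : forall pa, is_dag k X1 pa -> markov_equiv X1 pa1 pa ->
               forall v, a \notin pa v).

Lemma near_optimal_parents_in pa : is_dag k setT pa ->
  (forall pa', is_dag k setT pa' -> score P X setT pa' - gamma <= score P X setT pa) ->
  forall v, v \in X1 :\ a -> pa v \subset X1 :\ a.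
Proof.
move=> dag nearopt v vV; apply/idPn => nsub.
have bX1 : b \notin X1 by rewrite setD11.
have TE : b |: X1 = setT by rewrite setD1K.
have [G [dagG costG parentG]] := merge_exists dag ab P_pmf hba hab.
have : (a \in pa v) || (b \in pa v).
  case/subsetPn: nsub => u upa; rewrite !in_setD1 in_setT andbT negb_and !negbK.
  by case/orP => /eqP uE; rewrite -uE upa ?orbT.
move=> /(parentG v vV) aGv.
have /(gap1 dagG) hgap : ~ markov_equiv X1 pa1 G.
  by move=> /(nochild dagG) /(_ v); rewrite aGv.
have dag_ext : is_dag k setT (add_sink pa1 b [set a]).
  rewrite -TE; apply: (is_dag_add_sink dag1 bX1); last by rewrite cards1.
  by rewrite sub1set /X1 in_setD1 ab in_setT.
have := nearopt _ dag_ext; rewrite -{1}TE score_add_sink //.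
have hcard : 3 * #|Var|%:R * lam = 3 * (#|X1|%:R * lam) + 3 * lam :> R.
  by rewrite -cardsT (cardsD1 b) in_setT add1n -addn1 natrD; ring.
have : 0 <= #|X1|%:R * lam by rewrite mulr_ge0 // ltW.
move: costG hgap gamma_le hba lam_gt0; rewrite -/X1 hcard; lra.
Qed.

End NearOptimal.

Theorem theorem4 (R : realType) (Om Var : finType) (T : eqType)
  (k : nat) (P : Om -> R) (X : Var -> Om -> T) (C : Om -> bool)
  (a b : Var) (alpha beta lambda gamma : R) :
  let X1 := [set: Var] :\ b in
  let d := #|Var| in
  (0 < k)%N ->
  is_pmf P ->
  a \in X1 ->
  (k <= #|X1|)%N ->
  0 < alpha -> 0 < beta ->
  (* (I) unique optimal EC for D1 over X1, gap at least beta *)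
  (exists pa1, is_dag k X1 pa1 /\
     (forall pa, is_dag k X1 pa -> score P X X1 pa <= score P X X1 pa1) /\
     (forall pa, is_dag k X1 pa -> ~ markov_equiv X1 pa1 pa ->
        score P X X1 pa <= score P X X1 pa1 - beta) /\
  (* (II) X_a has no children in any structure of the optimal EC *)
     (forall pa, is_dag k X1 pa -> markov_equiv X1 pa1 pa ->
        forall v, a \notin pa v)) ->
  (* (III) *)
  condH P X a (X1 :\ a) = alpha ->
  (* lambda in (0, min(alpha, beta/(3d))) *)
  0 < lambda -> lambda < alpha -> lambda < beta / (3 * d%:R) ->
  (* (IV) hidden Bernoulli C *)
  (forall (c : bool) (w : Om),
     Pr P (fun w' => (C w' == c) && agree X X1 w w') =
     Pr P (fun w' => C w' == c) * Pr P (agree X X1 w)) ->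
  Pr P (fun w' => C w' && (X b w' == X a w')) = Pr P C ->
  (forall w : Om,
     Pr P (fun w' => ~~ C w' && (X b w' == X b w) && agree X X1 w w')
       * Pr P (fun w' => ~~ C w') =
     Pr P (fun w' => ~~ C w' && (X b w' == X b w))
       * Pr P (fun w' => ~~ C w' && agree X X1 w w')) ->
  (* (V) *)
  Num.max (condH P X b [set a]) (condH P X a [set b]) = lambda ->
  (* gamma *)
  0 < gamma -> gamma <= beta - 3 * d%:R * lambda ->
  stable k P X gamma (X1 :\ a).
Proof.
move=> X1 d k_gt0 P_pmf aX1 _ _ _ [pa1 [dag1 [opt1 [gap1 nochild]]]] _ lam_gt0 _ _ _ _ _
  lam_max _ gamma_le.
have ab : a != b by move: aX1; rewrite in_setD1 => /andP [].
have hba : condH P X b [set a] <= lambda by rewrite -lam_max le_max lexx.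
have hab : condH P X a [set b] <= lambda by rewrite -lam_max le_max lexx orbT.
split.
  exact: (near_optimal_parents_in P_pmf k_gt0 ab hba hab lam_gt0 gamma_le dag1 gap1
    nochild).
have a_nchild v : a \notin pa1 v := nochild pa1 dag1 (@markov_equiv_refl _ X1 pa1) v.
have d_gt0 : 0 < d%:R :> R by rewrite ltr0n; apply/card_gt0P; exists a.
have : 0 < 3 * d%:R * lambda by rewrite !mulr_gt0.
by move=> pos; apply: (marginal_unique_optimum aX1 dag1 a_nchild opt1 gap1); lra.
Qed.
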